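(* Let $X$ be a space, $Y$ a metrizable space and $\kappa$ an infinite cardinal. (a) If $X$ is a strict compact-chain of length $\kappa$, then $\mathsf{L_{cl}}(X,Y)$ holds. (b) If $X$ is countably compact and is a strict chain of length $\kappa$ of open subsets each contained in some Lindelöf subset of $X$, then $\mathsf{BR}(X,Y)$ holds. (c) In particular, if $X$ is a countably compact Type I space, then both $\mathsf{BR_{cl}}(X,Y)$ and $\mathsf{L_{cl}}(X,Y)$ hold.
   Context: All spaces are Hausdorff and maps continuous. For a property $\mathcal P$, $X$ is a strict $\mathcal P$-chain of length $\kappa$ if $X=\bigcup_{\alpha<\kappa}H_\alpha$ with $H_\alpha\subsetneq H_\beta$ for $\alpha<\beta$ and each $H_\alpha$ having $\mathcal P$. A space $X$ is of Type I if $X=\bigcup_{\alpha<\omega_1}X_\alpha$ with $X_\alpha$ open, $\overline{X_\alpha}\subset X_\beta$ for $\alpha<\beta$, $\overline{X_\alpha}$ Lindelöf, and $X\neq X_\alpha$ for all $\alpha$. For a non-Lindelöf space $X$ and a space $Y$: $\mathsf{L}(X,Y)$ means that for every continuous $f:X\to Y$ there is a Lindelöf $Z\subset X$ with $f(Z)=f(X)$; $\mathsf{BR}(X,Y)$ means that for every continuous $f:X\to Y$ there is a Lindelöf $Z\subset X$ such that $f(X\setminus W)=f(X\setminus Z)$ for every Lindelöf $W\supseteq Z$. The subscript $\mathsf{cl}$ means that $Z$ can moreover be chosen closed. (For Lindelöf $X$ these properties are regarded as trivially true.) *)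

From HB Require Import structures.
From mathcomp Require Import all_boot all_order.
From mathcomp Require Import all_classical all_reals all_analysis.
From Stdlib Require Import Reals.
Set Implicit Arguments. Unset Strict Implicit. Unset Printing Implicit Defensive.
Local Open Scope classical_set_scope.
Local Open Scope card_scope.

Definition strict_wellorder (I : Type) (lt : I -> I -> Prop) : Prop :=
  (forall a, ~ lt a a) /\
  (forall a b c, lt a b -> lt b c -> lt a c) /\
  (forall a b, lt a b \/ a = b \/ lt b a) /\
  well_founded lt.

(* (I, lt) is (order-isomorphic to) an infinite cardinal kappa, i.e. the set of
   ordinals alpha < kappa: an infinite well-order each of whose proper initial
   segments has strictly smaller cardinality. *)
Definition infinite_cardinal (I : Type) (lt : I -> I -> Prop) : Prop :=
  strict_wellorder lt /\ infinite_set [set: I] /\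
  forall a, ~ ([set: I] #<= [set b | lt b a]).

Definition is_omega1 (I : Type) (lt : I -> I -> Prop) : Prop :=
  strict_wellorder lt /\ ~ countable [set: I] /\
  forall a, countable [set b | lt b a].

Definition Lindelof (X : topologicalType) (A : set X) : Prop :=
  forall (I : Type) (U : I -> set X), (forall i, open (U i)) ->
    A `<=` \bigcup_i U i ->
    exists J : set I, countable J /\ A `<=` \bigcup_(i in J) U i.

Definition countably_compact (X : topologicalType) : Prop :=
  forall U : nat -> set X, (forall n, open (U n)) ->
    [set: X] `<=` \bigcup_n U n ->
    exists N : nat, [set: X] `<=` \bigcup_(n in [set m | (m < N)%N]) U n.

Definition metrizable (Y : topologicalType) : Prop :=
  exists d : Y -> Y -> R,
    (forall x y, Rle 0 (d x y)) /\
    (forall x y, d x y = 0%R <-> x = y) /\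
    (forall x y, d x y = d y x) /\
    (forall x y z, Rle (d x z) (Rplus (d x y) (d y z))) /\
    (forall A : set Y, open A <->
       forall x, A x -> exists e : R, Rlt 0 e /\ [set y | Rlt (d x y) e] `<=` A).

Definition strict_chain (X : topologicalType) (I : Type) (lt : I -> I -> Prop)
  (P : set X -> Prop) : Prop :=
  exists H : I -> set X,
    [set: X] = \bigcup_i H i /\
    (forall a b, lt a b -> H a `<` H b) /\
    (forall a, P (H a)).

Definition TypeI (X : topologicalType) : Prop :=
  exists (J : Type) (ltJ : J -> J -> Prop) (Xa : J -> set X),
    is_omega1 ltJ /\
    (forall a, open (Xa a)) /\
    (forall a b, ltJ a b -> closure (Xa a) `<=` Xa b) /\
    (forall a, Lindelof (closure (Xa a))) /\
    [set: X] = \bigcup_a Xa a /\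
    (forall a, Xa a <> [set: X]).

(* L(X,Y) / L_cl(X,Y); trivially true when X is Lindelof. *)
Definition Lprop (cl : bool) (X Y : topologicalType) : Prop :=
  Lindelof [set: X] \/
  forall f : X -> Y, continuous f ->
    exists Z : set X, Lindelof Z /\ (cl -> closed Z) /\ f @` Z = f @` [set: X].

(* BR(X,Y) / BR_cl(X,Y); trivially true when X is Lindelof. *)
Definition BRprop (cl : bool) (X Y : topologicalType) : Prop :=
  Lindelof [set: X] \/
  forall f : X -> Y, continuous f ->
    exists Z : set X, Lindelof Z /\ (cl -> closed Z) /\
      forall W : set X, Lindelof W -> Z `<=` W -> f @` (~` W) = f @` (~` Z).

From HB Require Import structures.
From mathcomp Require Import all_boot all_order.
From mathcomp Require Import all_classical all_reals all_analysis.
From mathcomp Require Import finmap.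
From Stdlib Require Import Rbase Lra.
Local Open Scope classical_set_scope.

(* If the index order has a countable cofinal subset, X is a countable union of Lindelof
   sets, hence Lindelof, and there is nothing to prove.  Otherwise every countable set of
   indices has an upper bound.  For countably compact X and metrizable Y, the image f(X)
   is totally bounded, hence separable, and f maps closed sets of X onto closed subsets
   of f(X).  For each of the countably many balls B of a countable base of f(X) pick an
   index a_B such that f(C_(a_B)) meets B (resp. f(X \ H_(a_B)) misses B), whenever some
   index does, and let b bound all a_B: then f(C_b) is dense, hence equal to f(X), and
   f(X \ H_b) is contained in the closure of every f(X \ H_c).  Since a Lindelof W lies in
   some H_c, the latter gives BR.  In case (a), a compact chain with no countable cofinal
   subset makes X countably compact. *)

Lemma compact_cover_compact {X : topologicalType} {A : set X} :
  compact A -> cover_compact A.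
Proof.
have [[a _]|A0] := pselect (exists a, A a); last first.
  by move=> _ I D F _ _; exists fset0 => // x Ax; case: A0; exists x.
pose Xa : ptopologicalType := HB.pack_for ptopologicalType X (isPointed.Build X a).
by move=> cA; have : @compact Xa A := cA; rewrite compact_cover.
Qed.

Lemma compact_Lindelof {X : topologicalType} {A : set X} : compact A -> Lindelof A.
Proof.
move=> /compact_cover_compact cA I U oU AU.
have [D _ AD] := cA {classic I} [set: I] U (fun i _ => oU i) AU.
by exists [set` D]; split; [exact: (countable_fset D) | move=> x /AD [i Di Uix]; exists i].
Qed.

Lemma Lindelof_bigcup (X : topologicalType) (I : Type) (J : set I) (L : I -> set X) :
  countable J -> (forall j, J j -> Lindelof (L j)) -> Lindelof (\bigcup_(j in J) L j).
Proof.
move=> cJ LL K U oU LU.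
have /choice [S hS] : forall j, exists S : set K, J j -> countable S /\ L j `<=` \bigcup_(i in S) U i.
  move=> j; have [Jj|] := pselect (J j); last by exists set0.
  have [S hS] := LL j Jj K U oU (fun x Ljx => LU x (ex_intro2 _ _ j Jj Ljx)).
  by exists S.
exists (\bigcup_(j in J) S j); split.
  by apply: bigcup_countable => // j /hS [].
move=> x [j Jj /(proj2 (hS j Jj)) [i Sji Uix]].
by exists i => //; exists j.
Qed.

Definition countably_directed {K : Type} (lt : K -> K -> Prop) : Prop :=
  forall J : set K, countable J -> exists b, forall j, J j -> lt j b.

Lemma countably_directed_image {K T : Type} {lt : K -> K -> Prop} {J : set T} (a : T -> K) :
  countably_directed lt -> countable J -> exists b, forall t, J t -> lt (a t) b.
Proof.
move=> dir cJ; have [b hb] := dir (a @` J) (sub_countable (card_image_le a J) cJ).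
by exists b => t Jt; apply: hb; exists t.
Qed.

Section IncreasingChain.
Context {X : topologicalType} {K : Type} {lt : K -> K -> Prop} {H : K -> set X}.
Hypotheses (incH : forall a b, lt a b -> H a `<=` H b) (covH : [set: X] `<=` \bigcup_i H i).

Lemma Lindelof_or_countably_directed {L : K -> set X} :
  (forall a b, lt a b \/ a = b \/ lt b a) ->
  (forall a, H a `<=` L a) -> (forall a, Lindelof (L a)) ->
  Lindelof [set: X] \/ countably_directed lt.
Proof.
move=> total HL LL.
have [dir|/existsNP [J /not_implyP [cJ /forallNP unbJ]]] := pselect (countably_directed lt).
  by right.
left.
suff -> : [set: X] = \bigcup_(j in J) L j by exact: Lindelof_bigcup.
apply/seteqP; split=> x // _; have [a _ Hax] := covH x I.
have /existsNP [j /not_implyP [Jj ja]] := unbJ a.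
exists j => //; apply: HL.
by case: (total j a) => [/ja [] | [-> // | /incH/(_ x Hax)]].
Qed.

Hypothesis dir : countably_directed lt.

Lemma Lindelof_sub_chain {W : set X} :
  (forall a, open (H a)) -> Lindelof W -> exists b, W `<=` H b.
Proof.
move=> oH LW; have [J [cJ WJ]] := LW K H oH (fun x _ => covH x I).
have [b Jb] := dir J cJ.
by exists b => x /WJ [j Jj]; exact: incH _ _ (Jb j Jj) x.
Qed.

Lemma countably_compact_compact_chain :
  (forall a, compact (H a)) -> countably_compact X.
Proof.
move=> cH U oU XU; apply: contrapT => noN.
have /choice [x xN] : forall N, exists x, ~ (\bigcup_(n in [set m | (m < N)%N]) U n) x.
  move=> N; apply: contrapT => /forallNP xN; apply: noN; exists N => x _.
  exact: contrapT (xN x).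
have /choice [a Hax] : forall N, exists a, H a (x N).
  by move=> N; have [a _ ?] := covH (x N) I; exists a.
have [b ab] := countably_directed_image a dir (countableP [set: nat]).
have [D _ HbD] := compact_cover_compact (cH b) _ [set: nat] U (fun n _ => oU n) (fun x _ => XU x I).
pose M := (\max_(n <- D) n).+1.
have [n /= Dn Unx] := HbD (x M) (incH _ _ (ab M I) _ (Hax M)).
by apply: (xN M); exists n => //=; rewrite ltnS; exact: leq_bigmax_seq.
Qed.

End IncreasingChain.

Lemma countably_directed_witness {K T : Type} {lt : K -> K -> Prop} {J : set T}
    (P : T -> K -> Prop) :
  countably_directed lt -> countable J ->
  exists b, forall t, J t -> (exists a, P t a) -> exists2 a, lt a b & P t a.
Proof.
move=> dir cJ; have [a0 _] := dir set0 (countable0 K).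
have /choice [a ha] : forall t, exists a, (exists a', P t a') -> P t a.
  move=> t; have [[a' Pa']|nP] := pselect (exists a', P t a'); first by exists a'.
  by exists a0 => /nP.
have [b ab] := countably_directed_image a dir cJ.
by exists b => t Jt /ha Pta; exists (a t) => //; exact: ab.
Qed.

Local Open Scope R_scope.

Definition metrizes {Y : topologicalType} (d : Y -> Y -> R) : Prop :=
  (forall x y, 0 <= d x y) /\
  (forall x y, d x y = 0 <-> x = y) /\
  (forall x y, d x y = d y x) /\
  (forall x y z, d x z <= d x y + d y z) /\
  (forall A : set Y, open A <->
     forall x, A x -> exists e : R, 0 < e /\ [set y | d x y < e] `<=` A).

Lemma inv_succ_gt0 (n : nat) : 0 < / INR n.+1.
Proof. exact/Rinv_0_lt_compat/lt_0_INR/Nat.lt_0_succ. Qed.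

Lemma inv_succ_le {k n : nat} : (k <= n)%nat -> / INR n.+1 <= / INR k.+1.
Proof.
move=> /leP kn; apply: Rinv_le_contravar; first exact/lt_0_INR/Nat.lt_0_succ.
exact/le_INR/le_n_S.
Qed.

Lemma exists_inv_succ_lt (e : R) : 0 < e -> exists n : nat, / INR n.+1 < e.
Proof.
move=> e0; have [n ne] := INR_unbounded (/ e); exists n.
have ie0 : 0 < / e by apply: Rinv_0_lt_compat.
rewrite -[X in _ < X]Rinv_inv; apply: Rinv_lt_contravar; rewrite S_INR; nra.
Qed.

Section MetrizableImage.
Context {X Y : topologicalType} {d : Y -> Y -> R} {f : X -> Y}.
Hypotheses (metric_d : metrizes d) (ccX : countably_compact X) (cont_f : continuous f).

Let d_ge0 x y : 0 <= d x y. Proof. by case: metric_d. Qed.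
Let d_eq0 x y : d x y = 0 <-> x = y. Proof. by case: metric_d => _ []. Qed.
Let d_sym x y : d x y = d y x. Proof. by case: metric_d => _ [_ []]. Qed.
Let d_triangle x y z : d x z <= d x y + d y z.
Proof. by case: metric_d => _ [_ [_ []]]. Qed.
Let d_open (A : set Y) :
  open A <-> forall x, A x -> exists e : R, 0 < e /\ [set y | d x y < e] `<=` A.
Proof. by case: metric_d => _ [_ [_ [_]]]. Qed.

Lemma open_dist_gt (y : Y) (r : R) : open [set z | r < d y z].
Proof.
apply/d_open => z /= rz; exists (d y z - r); split; first lra.
by move=> w /= zw; have := d_triangle y w z; rewrite (d_sym w z); lra.
Qed.

Lemma image_closed (C : set X) (y : Y) : closed C ->
  (forall e, 0 < e -> exists2 x, C x & d y (f x) < e) -> (f @` C) y.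
Proof.
move=> clC adh; apply: contrapT => notCy.
pose U n := if n is k.+1 then f @^-1` [set z | / INR k.+1 < d y z] else ~` C.
have oU n : open (U n).
  case: n => [|k]; first exact: closed_openC.
  by move/continuousP: cont_f; apply; exact: open_dist_gt.
have [x _|N UN] := ccX U oU.
  have [Cx|] := pselect (C x); last by exists 0%nat.
  have [k kx] : exists k : nat, / INR k.+1 < d y (f x).
    apply: exists_inv_succ_lt; have := d_ge0 y (f x).
    have : d y (f x) <> 0 by move/d_eq0 => yfx; apply: notCy; exists x.
    lra.
  by exists k.+1.
have [x Cx xy] := adh _ (inv_succ_gt0 N).
have [[|k] kN Ukx] := UN x I; first exact: Ukx Cx.
have kx : / INR k.+1 < d y (f x) := Ukx.
by have := inv_succ_le (ltnW (ltnW kN)); lra.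
Qed.

Lemma image_totally_bounded (r : R) : 0 < r ->
  exists s : seq X, forall x, exists2 z, z \in s & d (f z) (f x) < r.
Proof.
move=> r0; apply: contrapT => /forallNP nonet.
(* Otherwise g builds a sequence q with r-separated images.  The open sets O m of points
   staying more than r/4 away from f (q k) for all k >= m cover f(X), yet f (q N) lies
   in none of O 0, ..., O N. *)
have /choice [g gfar] : forall s : seq X, exists x, forall z, z \in s -> r <= d (f z) (f x).
  move=> s; have /existsNP [x xfar] := nonet s.
  by exists x => z zs; apply: Rnot_lt_le => zx; apply: xfar; exists z.
pose P n := iter n (fun s => g s :: s) [::].
pose q n := g (P n).
have qP m n : (m < n)%nat -> q m \in P n.
  elim: n => // n IH; rewrite ltnS leq_eqVlt => /orP [/eqP -> | /IH qm].
    by rewrite /= in_cons eqxx.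
  by rewrite /= in_cons qm orbT.
have q_sep m n : (m < n)%nat -> r <= d (f (q m)) (f (q n)).
  by move=> mn; exact: gfar (qP m n mn).
pose O m := [set y | exists2 e, 0 < e & forall k, (m <= k)%nat -> r / 4 + e <= d y (f (q k))].
have oO m : open (O m).
  apply/d_open => y [e e0 ye]; exists (e / 2); split; first lra.
  move=> z /= yz; exists (e / 2); first lra.
  by move=> k mk; have := ye k mk; have := d_triangle y z (f (q k)); lra.
have [x _|N ON] := ccX (fun m => f @^-1` O m) (fun m => proj1 (continuousP _) cont_f _ (oO m)).
  have [[k xk]|xfar] := pselect (exists k, d (f x) (f (q k)) < r / 2).
    exists k.+1 => //; exists (r / 4); first lra.
    move=> k' kk'; have := q_sep k k' kk'; have := d_triangle (f (q k)) (f x) (f (q k')).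
    by rewrite (d_sym (f (q k)) (f x)); lra.
  exists 0%nat => //; exists (r / 4); first lra.
  by move=> k _; apply: Rnot_lt_le => xk; apply: xfar; exists k; lra.
have [m mN [e e0 qNe]] := ON (q N) I.
by have := qNe N (ltnW mN); rewrite (proj2 (d_eq0 _ _) erefl); lra.
Qed.

Lemma image_separable : exists2 D : set X, countable D &
  forall x e, 0 < e -> exists2 z, D z & d (f z) (f x) < e.
Proof.
have /choice [s sn] : forall n : nat, exists s : seq X,
    forall x, exists2 z, z \in s & d (f z) (f x) < / INR n.+1.
  by move=> n; apply: image_totally_bounded; exact: inv_succ_gt0.
exists (\bigcup_n [set` s n]).
  by apply: bigcup_countable => [|n _]; [exact: countableP | exact/finite_set_countable/finite_seq].
move=> x e /exists_inv_succ_lt [n ne]; have [z zs zx] := sn n x.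
by exists z; [exists n | lra].
Qed.

Section DirectedChains.
Context {K : Type} {lt : K -> K -> Prop}.
Hypothesis dir : countably_directed lt.

Lemma closed_chain_image {C : K -> set X} :
  (forall a b, lt a b -> C a `<=` C b) -> [set: X] `<=` \bigcup_i C i ->
  (forall a, closed (C a)) -> exists b, f @` C b = f @` [set: X].
Proof.
move=> incC covC clC; have [D cD denseD] := image_separable.
pose meets n z a := exists2 x, C a x & d (f z) (f x) < / INR n.+1.
have [b hb] := countably_directed_witness (fun nz : nat * X => meets nz.1 nz.2) dir
  (countableX (countableP [set: nat]) cD).
exists b; apply/seteqP; split=> [_ [x _ <-]|_ [x _ <-]]; first by exists x.
apply: image_closed (clC b) _ => e e0.
have [n ne] : exists n : nat, / INR n.+1 < e / 2 by apply: exists_inv_succ_lt; lra.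
have [z Dz zx] := denseD x _ (inv_succ_gt0 n).
have [a _ Cax] := covC x I.
have [a' a'b [x' Ca'x' zx']] : exists2 a', lt a' b & meets n z a'.
  exact: hb (n, z) (conj I Dz) (ex_intro _ a (ex_intro2 _ _ x Cax zx)).
exists x'; first exact: incC _ _ a'b _ Ca'x'.
by have := d_triangle (f x) (f z) (f x'); rewrite (d_sym (f x) (f z)); lra.
Qed.

Lemma open_chain_complement_image {H : K -> set X} :
  (forall a b, lt a b -> H a `<=` H b) -> (forall a, open (H a)) ->
  exists b, forall c, f @` (~` H b) `<=` f @` (~` H c).
Proof.
move=> incH oH; have [D cD denseD] := image_separable.
pose avoids n z a := forall x, ~ H a x -> / INR n.+1 <= d (f z) (f x).
have [b hb] := countably_directed_witness (fun nz : nat * X => avoids nz.1 nz.2) dir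
  (countableX (countableP [set: nat]) cD).
exists b => c _ [x Hbx <-].
apply: image_closed; first by rewrite closedC.
move=> e e0; apply: contrapT => far.
have [n ne] : exists n : nat, / INR n.+1 < e / 2 by apply: exists_inv_succ_lt; lra.
have [z Dz zx] := denseD x _ (inv_succ_gt0 n).
have avoids_c : avoids n z c.
  move=> x' Hcx'; apply: Rnot_lt_le => zx'; apply: far; exists x' => //.
  by have := d_triangle (f x) (f z) (f x'); rewrite (d_sym (f x) (f z)); lra.
have [a ab avoids_a] : exists2 a, lt a b & avoids n z a.
  exact: hb (n, z) (conj I Dz) (ex_intro _ c avoids_c).
by have := avoids_a x (fun Hax => Hbx (incH _ _ ab _ Hax)); lra.
Qed.

Lemma BR_open_chain {H L : K -> set X} :
  (forall a b, lt a b -> H a `<=` H b) -> [set: X] `<=` \bigcup_i H i ->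
  (forall a, open (H a)) -> (forall a, H a `<=` L a) -> (forall a, Lindelof (L a)) ->
  exists b, forall W, Lindelof W -> L b `<=` W -> f @` (~` W) = f @` (~` L b).
Proof.
move=> incH covH oH HL LL; have [b minb] := open_chain_complement_image incH oH.
suff imW W : Lindelof W -> L b `<=` W -> f @` (~` W) = f @` (~` H b).
  by exists b => W LW LbW; rewrite !imW.
move=> LW LbW; apply/seteqP; split.
  by apply/image_subset/subsetC; exact: subset_trans (HL b) LbW.
have [c WHc] := Lindelof_sub_chain incH covH dir oH LW.
exact: subset_trans (minb c) (image_subset _ (subsetC WHc)).
Qed.

End DirectedChains.

End MetrizableImage.

Lemma Lprop_closed_chain {X Y : topologicalType} {K : Type} {lt : K -> K -> Prop}
    {C : K -> set X} :
  metrizable Y -> countably_compact X -> countably_directed lt ->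
  (forall a b, lt a b -> C a `<=` C b) -> [set: X] `<=` \bigcup_i C i ->
  (forall a, closed (C a)) -> (forall a, Lindelof (C a)) -> Lprop true X Y.
Proof.
move=> [d metric_d] ccX dir incC covC clC LC; right => f cont_f.
have [b fCb] := closed_chain_image metric_d ccX cont_f dir incC covC clC.
by exists (C b).
Qed.

Lemma Lprop_compact_chain {X Y : topologicalType} {K : Type} {lt : K -> K -> Prop}
    {H : K -> set X} :
  hausdorff_space X -> metrizable Y -> (forall a b, lt a b \/ a = b \/ lt b a) ->
  (forall a b, lt a b -> H a `<=` H b) -> [set: X] `<=` \bigcup_i H i ->
  (forall a, compact (H a)) -> Lprop true X Y.
Proof.
move=> hX mY total incH covH cH; have LH a := compact_Lindelof (cH a).
have [|dir] := Lindelof_or_countably_directed incH covH total (fun a => @subset_refl _ (H a)) LH.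
  by left.
have ccX := countably_compact_compact_chain incH covH dir cH.
exact: Lprop_closed_chain mY ccX dir incH covH (fun a => compact_closed hX (cH a)) LH.
Qed.

Lemma BRprop_open_chain (cl : bool) {X Y : topologicalType} {K : Type} {lt : K -> K -> Prop}
    {H L : K -> set X} :
  metrizable Y -> countably_compact X -> (forall a b, lt a b \/ a = b \/ lt b a) ->
  (forall a b, lt a b -> H a `<=` H b) -> [set: X] `<=` \bigcup_i H i ->
  (forall a, open (H a)) -> (forall a, H a `<=` L a) -> (forall a, Lindelof (L a)) ->
  (cl -> forall a, closed (L a)) -> BRprop cl X Y.
Proof.
move=> [d metric_d] ccX total incH covH oH HL LL clL.
have [|dir] := Lindelof_or_countably_directed incH covH total HL LL; first by left.
right => f cont_f.
have [b hb] := BR_open_chain metric_d ccX cont_f dir incH covH oH HL LL.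
by exists (L b); split; [|split=> // /clL].
Qed.

Lemma TypeI_BRprop_Lprop (X Y : topologicalType) :
  metrizable Y -> countably_compact X -> TypeI X -> BRprop true X Y /\ Lprop true X Y.
Proof.
move=> mY ccX [K [lt [U [[[_ [_ [total _]]] _] [oU [clU [LU [eqU _]]]]]]]].
have UclU a : U a `<=` closure (U a) := @subset_closure _ (U a).
have incU a b : lt a b -> U a `<=` U b := fun ab => subset_trans (UclU a) (clU a b ab).
have incclU a b : lt a b -> closure (U a) `<=` closure (U b).
  by move=> ab; apply: subset_trans (clU a b ab) (UclU b).
have covU := subsetW eqU.
have clclU a : closed (closure (U a)) := @closed_closure _ (U a).
split; first exact: (BRprop_open_chain true mY ccX total incU covU oU UclU LU (fun _ => clclU)).
have [|dir] := Lindelof_or_countably_directed incU covU total UclU LU; first by left.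
apply: Lprop_closed_chain mY ccX dir incclU _ clclU LU.
exact: subset_trans covU (subset_bigcup (fun a _ => UclU a)).
Qed.

Theorem theorem5p8 (X Y : topologicalType) (I : Type) (lt : I -> I -> Prop) :
  hausdorff_space X -> metrizable Y -> infinite_cardinal lt ->
  (strict_chain lt (@compact X) -> Lprop true X Y) /\
  (countably_compact X ->
     strict_chain lt (fun H : set X => open H /\ exists L, Lindelof L /\ H `<=` L) ->
     BRprop false X Y) /\
  (countably_compact X -> TypeI X -> BRprop true X Y /\ Lprop true X Y).
Proof.
move=> hX mY [[_ [_ [total _]]] _]; split; last split.
- move=> [H [covH [ltH cH]]].
  exact: Lprop_compact_chain hX mY total (fun a b ab => properW (ltH a b ab)) (subsetW covH) cH.
- move=> ccX [H [covH [ltH oLH]]].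
  have /choice [L HL] : forall a, exists L, Lindelof L /\ H a `<=` L := fun a => (oLH a).2.
  apply: (BRprop_open_chain false mY ccX total (fun a b ab => properW (ltH a b ab)) (subsetW covH)
    (fun a => (oLH a).1) (fun a => (HL a).2) (fun a => (HL a).1)).
  by [].
- exact: TypeI_BRprop_Lprop.
Qed.
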